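(* Let $\rho$ be a measurable c.n.d. kernel on $\mathcal{X}$ with $\rho(x,x)=0$ for all $x\in\mathcal{X}$, let $w:\mathcal{X}\to[0,1]$ be a measurable weight function, and let $v:\mathcal{X}\to\mathcal{X}$ be measurable. Then the threshold-weighted kernel score $\mathrm{tw}S_\rho(\cdot,\cdot;v)$ (as a scoring rule on $\mathcal{M}_{\tilde\rho}$, $\tilde\rho(x,x')=\rho(v(x),v(x'))$) is localising with respect to $w$ if and only if $\rho(v(z),v(x))=\rho(v(z'),v(x))$ for all $z,z'\in\{w=0\}$ and all $x\in\mathcal{X}$.
   Context: A kernel $\rho:\mathcal{X}\times\mathcal{X}\to\mathbb{R}$ is symmetric; it is conditionally negative definite (c.n.d.) if $\sum_{i,j}c_ic_j\rho(x_i,x_j)\le0$ for all finite choices $x_i\in\mathcal{X}$, $c_i\in\mathbb{R}$ with $\sum_ic_i=0$. Threshold-weighted kernel score: $\mathrm{tw}S_\rho(P,y;v)=\mathbb{E}_P[\rho(v(X),v(y))]-\tfrac12\mathbb{E}_P[\rho(v(X),v(X'))]-\tfrac12\rho(v(y),v(y))$ with $X,X'\sim P$ independent. $\mathcal{M}_{\tilde\rho}$ is the set of probability measures $P$ on $\mathcal{X}$ with $\mathbb{E}_P[\tilde\rho(X,x_0)]<\infty$ for some $x_0$. Write $\{w>0\}=\{x:w(x)>0\}$, $\{w=0\}=\{x:w(x)=0\}$. A scoring rule $S$ on a class $\mathcal{M}$ is localising with respect to $w$ if for all $P,Q\in\mathcal{M}$, $P(\cdot\cap\{w>0\})=Q(\cdot\cap\{w>0\})$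 implies $S(P,y)=S(Q,y)$ for all $y\in\mathcal{X}$. *)

From HB Require Import structures.
From mathcomp Require Import all_boot all_order all_algebra.
From mathcomp Require Import all_classical all_reals all_analysis.
Set Implicit Arguments. Unset Strict Implicit. Unset Printing Implicit Defensive.
Import Order.TTheory GRing.Theory Num.Theory.
Local Open Scope classical_set_scope.
Local Open Scope ring_scope.

Section defs.
Context {d : measure_display} {X : measurableType d} {R : realType}.

Definition symmetric_kernel (rho : X -> X -> R) : Prop :=
  forall x y, rho x y = rho y x.

Definition cnd_kernel (rho : X -> X -> R) : Prop :=
  symmetric_kernel rho /\
  forall (n : nat) (x : 'I_n -> X) (c : 'I_n -> R),
    \sum_(i < n) c i = 0 ->
    \sum_(i < n) \sum_(j < n) c i * c j * rho (x i) (x j) <= 0.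

Definition twS (rho : X -> X -> R) (v : X -> X)
    (P : probability X R) (y : X) : \bar R :=
  ((\int[P]_x (rho (v x) (v y))%:E)
   - (2^-1)%:E * (\int[(P \x P)%E]_z (rho (v z.1) (v z.2))%:E)
   - (2^-1)%:E * (rho (v y) (v y))%:E)%E.

Definition M_class (rhot : X -> X -> R) (P : probability X R) : Prop :=
  exists x0 : X, (\int[P]_x (rhot x x0)%:E < +oo)%E.

Definition localising (S : probability X R -> X -> \bar R)
    (M : probability X R -> Prop) (w : X -> R) : Prop :=
  forall P Q : probability X R, M P -> M Q ->
    (forall A : set X, measurable A ->
       P (A `&` [set x | 0 < w x]) = Q (A `&` [set x | 0 < w x])) ->
    forall y : X, S P y = S Q y.

End defs.

(** The kernel score of a point mass is [twS (\d_t) x = rho (v t) (v x)], and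
  point masses at two zeros of [w] agree on [{w > 0}]; so localisation forces
  [rho (v z) (v x)] to be the same for all [z] in [{w = 0}].  Conversely, if it
  is, then every integrand occurring in [twS] is constant on [{w = 0}] in each
  variable (using symmetry of [rho]), and the integral of such a nonnegative
  function only sees the restriction of [P] to [{w > 0}] together with the mass
  [P {w = 0} = 1 - P {w > 0}]. *)

From HB Require Import structures.
From mathcomp Require Import all_boot all_order all_algebra.
From mathcomp Require Import all_classical all_reals all_analysis.
From mathcomp Require Import measurable_realfun lra.
Set Implicit Arguments.
Unset Strict Implicit.
Unset Printing Implicit Defensive.
Import Order.TTheory GRing.Theory Num.Theory.
Local Open Scope classical_set_scope.
Local Open Scope ring_scope.

Lemma ge0_integral_eq_agree_on d (X : measurableType d) (R : realType)
    (P Q : probability X R) (W : set X) (f : X -> \bar R) : measurable W ->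
  (forall A, measurable A -> P (A `&` W) = Q (A `&` W)) ->
  measurable_fun setT f -> (forall x, 0 <= f x)%E ->
  (forall z z', ~ W z -> ~ W z' -> f z = f z') ->
  (\int[P]_x f x = \int[Q]_x f x)%E.
Proof.
move=> mW PQW mf f0 f_cst.
have split_W (mu : probability X R) :
    (\int[mu]_x f x = \int[mu]_(x in W) f x + \int[mu]_(x in ~` W) f x)%E.
  rewrite -ge0_integral_setU ?setUv //; first exact: measurableC.
  by rewrite /disj_set setICr.
rewrite !split_W; congr (_ + _)%E.
  apply: eq_measure_integral => A mA AW.
  by rewrite -(setIidl AW); exact: PQW.
have [[z0 Wz0]|allW] := pselect (exists z, ~ W z); last first.
  suff -> : ~` W = set0 by rewrite !integral_set0.
  by apply/seteqP; split=> // x Wx; apply: allW; exists x.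
have mCW : measurable (~` W) by exact: measurableC.
have PQC : P (~` W) = Q (~` W).
  by rewrite !probability_setC // -(setTI W) PQW.
have f_off (mu : probability X R) :
    (\int[mu]_(x in ~` W) f x = \int[mu]_(x in ~` W) (cst (f z0)) x)%E.
  by apply: eq_integral => x /[!inE] Wx; exact: f_cst.
by rewrite !f_off !integral_cst //; congr (_ * _)%E.
Qed.

Lemma integral_diracT d (X : measurableType d) (R : realType) (a : X)
    (f : X -> \bar R) : measurable_fun setT f ->
  (\int[\d_ a]_x f x = f a)%E.
Proof. by move=> mf; rewrite integral_dirac //= diracT mul1e. Qed.

Lemma cnd_kernel_ge0 d (X : measurableType d) (R : realType)
    (rho : X -> X -> R) : cnd_kernel rho -> (forall x, rho x x = 0) ->
  forall x y, 0 <= rho x y.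
Proof.
move=> [sym cnd] rho0 x y.
(* test the definition against the weights [1, -1] at the points [x, y] *)
have := cnd 2 (fun i => if i == ord0 then x else y)
              (fun i => if i == ord0 then 1 else -1).
rewrite !big_ord_recr !big_ord0 /= !rho0 (sym y x) !add0r subrr => /(_ erefl).
lra.
Qed.

Section threshold_weighted_kernel_score.
Context d (X : measurableType d) (R : realType) (rho : X -> X -> R) (v : X -> X).
Hypotheses (mrho : measurable_fun setT (fun z : X * X => rho z.1 z.2))
  (mv : measurable_fun setT v) (rho_ge0 : forall x y, 0 <= rho x y).

Let rhov (z : X * X) : \bar R := (rho (v z.1) (v z.2))%:E.

Let rhov_ge0 z : (0 <= rhov z)%E. Proof. by rewrite lee_fin. Qed.

Let measurable_rhov : measurable_fun setT rhov.
Proof.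
apply/measurable_EFinP.
have mvv : measurable_fun setT (fun z : X * X => (v z.1, v z.2)).
  by apply/measurable_fun_pair; apply: measurableT_comp.
exact: measurableT_comp mrho mvv.
Qed.

Let measurable_rhov_l y : measurable_fun setT (fun x => rhov (x, y)).
Proof. exact: measurable_fun_pair1 y measurable_rhov. Qed.

Let measurable_rhov_r x : measurable_fun setT (fun y => rhov (x, y)).
Proof. exact: measurable_fun_pair2 x measurable_rhov. Qed.

Lemma M_class_dirac (t : X) :
  M_class (fun x x' => rho (v x) (v x')) (\d_ t : probability X R).
Proof.
by exists t; rewrite integral_diracT ?ltry //; exact: measurable_rhov_l.
Qed.

Lemma twS_dirac : (forall x, rho x x = 0) ->
  forall t y, twS rho v (\d_ t : probability X R) y = (rho (v t) (v y))%:E.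
Proof.
move=> rho0 t y.
rewrite /twS integral_diracT; last exact: measurable_rhov_l.
rewrite (fubini_tonelli1 rhov measurable_rhov rhov_ge0).
rewrite (eq_integral (fun a => rhov (a, t))); last first.
  by move=> a _; rewrite /fubini_F integral_diracT //; exact: measurable_rhov_r.
rewrite integral_diracT; last exact: measurable_rhov_l.
by rewrite /rhov /= !rho0 !mulr0 !oppr0 !adde0.
Qed.

Lemma twS_localising_const_on_zeros (w : X -> R) : (forall x, rho x x = 0) ->
  localising (twS rho v) (M_class (fun x x' => rho (v x) (v x'))) w ->
  forall z z', w z = 0 -> w z' = 0 ->
  forall x, rho (v z) (v x) = rho (v z') (v x).
Proof.
move=> rho0 loc z z' wz wz' x.
have dirac_agree A : measurable A ->
    (\d_ z : probability X R) (A `&` [set x | 0 < w x]) =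
    (\d_ z' : probability X R) (A `&` [set x | 0 < w x]).
  by move=> mA; rewrite /= !diracE !memNset // => -[_ /=]; rewrite ?wz ?wz' ltxx.
have := loc _ _ (M_class_dirac z) (M_class_dirac z') dirac_agree x.
by rewrite !twS_dirac // => -[].
Qed.

Lemma twS_localising_of_const_on_zeros (w : X -> R) :
  symmetric_kernel rho -> measurable_fun setT w -> (forall x, 0 <= w x) ->
  (forall z z', w z = 0 -> w z' = 0 ->
     forall x, rho (v z) (v x) = rho (v z') (v x)) ->
  localising (twS rho v) (M_class (fun x x' => rho (v x) (v x'))) w.
Proof.
move=> sym mw w_ge0 rho_cst P Q _ _ PQW y.
set W := [set x | 0 < w x] in PQW.
have mW : measurable W.
  rewrite (_ : W = w @^-1` `]0, +oo[); last first.
    by apply/seteqP; split=> x; rewrite /= in_itv /= andbT.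
  by rewrite -(setTI (_ @^-1` _)); exact: mw.
have zero_off z : ~ W z -> w z = 0.
  by move=> /negP; rewrite /W /= -leNgt => wz; apply/eqP; rewrite eq_le wz w_ge0.
have rho_cst_off z z' x : ~ W z -> ~ W z' -> rho (v z) (v x) = rho (v z') (v x).
  by move=> /zero_off wz /zero_off wz'; exact: rho_cst.
have PQ_integral := ge0_integral_eq_agree_on mW PQW.
rewrite /twS PQ_integral; first last.
- by move=> z z' Wz Wz'; rewrite (rho_cst_off z z').
- by move=> x; rewrite lee_fin.
- exact: measurable_rhov_l.
congr (_ - _ * _ - _)%E.
rewrite !(fubini_tonelli1 rhov measurable_rhov rhov_ge0).
transitivity (\int[P]_a (fubini_F Q rhov a))%E.
  apply: eq_integral => a _; apply: PQ_integral.
  - exact: measurable_rhov_r.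
  - by move=> x; exact: rhov_ge0.
  - move=> z z' Wz Wz'.
    by rewrite /rhov /= (sym _ (v z)) (sym _ (v z')) (rho_cst_off z z').
apply: PQ_integral.
- exact: measurable_fun_fubini_tonelli_F.
- by move=> x; apply: integral_ge0 => b _.
- move=> z z' Wz Wz'; apply: eq_integral => b _.
  by rewrite /rhov /= (rho_cst_off z z').
Qed.

End threshold_weighted_kernel_score.

Theorem proposition4 (d : measure_display) (X : measurableType d) (R : realType)
    (rho : X -> X -> R) (w : X -> R) (v : X -> X) :
  measurable_fun setT (fun z : X * X => rho z.1 z.2) ->
  cnd_kernel rho ->
  (forall x, rho x x = 0) ->
  measurable_fun setT w ->
  (forall x, 0 <= w x <= 1) ->
  measurable_fun setT v ->
  localising (twS rho v) (M_class (fun x x' => rho (v x) (v x'))) w <->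
  (forall z z' : X, w z = 0 -> w z' = 0 ->
     forall x : X, rho (v z) (v x) = rho (v z') (v x)).
Proof.
move=> mrho cnd rho0 mw w01 mv.
have rho_ge0 := cnd_kernel_ge0 cnd rho0.
have sym : symmetric_kernel rho by case: cnd.
have w_ge0 x : 0 <= w x by case/andP: (w01 x).
split.
- exact: (twS_localising_const_on_zeros mrho mv rho_ge0 rho0).
- exact: (twS_localising_of_const_on_zeros mrho mv rho_ge0 sym mw w_ge0).
Qed.
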